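(* Let $J$ be a nonempty basic cylinder in $M_a$ and $p=(p_1,p_2,\dots)\in J$. Then for each $i\in\mathbb N$: $i\notin\Lambda(J)$ if and only if $x_i=p_i$ for all $x=(x_1,x_2,\dots)\in\mathrm{GS}(J,p)$.
   Context: Let $a=\{a_i\}$ be a sequence of positive reals with $\sum_i a_i^2<\infty$, $M_a=\{x\in\mathbb{R}^{\mathbb N}:\sum_i a_i^2x_i^2<\infty\}$ with inner product $\langle x,y\rangle_a=\sum_i a_i^2x_iy_i$ and norm $\|\cdot\|_a$. $e_i$ denotes the sequence with $1$ in position $i$ and $0$ elsewhere. For nonempty $E\subset M_a$, $\Lambda(E)$ is the set of $i$ for which there exist $x\in E$ and $\alpha\ne0$ with $x+\alpha e_i\in E$. For $p\in E$, $\mathrm{GS}(E,p)=\{p+\sum_i\alpha_i(x_i-p)\in M_a: x_i\in E,\ \alpha_i\in\mathbb R\}$, the index running over a finite or countable subset of $\mathbb N$, infinite sums being $\|\cdot\|_a$-limits of partial sums. A basic cylinder is a set $J=\prod_{i=1}^\infty J_i$ where, for some $n\in\mathbb N$ and pairwise disjoint $\Lambda_1,\dots,\Lambda_4\subset\{1,\dots,n\}$: $J_i=[0,p_{2i}]$ ($i\in\Lambda_1$), $[p_{1i},p_{2i}]$ ($i\in\Lambda_2$), $[p_{1i},1]$ ($i\in\Lambda_3$), $\{p_{1i}\}$ ($i\in\Lambda_4$), $[0,1]$ otherwise, with $0<p_{1i}<p_{2i}<1$ for $i\in\Lambda_1\cup\Lambda_2\cup\Lambda_3$ and $0\le p_{1i}\le1$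 for $i\in\Lambda_4$. *)

From Stdlib Require Import Reals.
From Coquelicot Require Import Coquelicot.
Open Scope R_scope.

Definition seqR := nat -> R.

Definition weight_ok (a : seqR) : Prop :=
  (forall i, 0 < a i) /\ ex_series (fun i => (a i) ^ 2).

Definition in_Ma (a : seqR) (x : seqR) : Prop :=
  ex_series (fun i => (a i) ^ 2 * (x i) ^ 2).

(* ||x||_a^2 = sum a_i^2 x_i^2  (meaningful for x in M_a) *)
Definition normsq_a (a : seqR) (x : seqR) : R :=
  Series (fun i => (a i) ^ 2 * (x i) ^ 2).

Definition e_ (i : nat) : seqR := fun j => if Nat.eqb j i then 1 else 0.

Definition Lambda (E : seqR -> Prop) (i : nat) : Prop :=
  exists x alpha, E x /\ alpha <> 0 /\ E (fun j => x j + alpha * e_ i j).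

Fixpoint psum (f : nat -> R) (n : nat) : R :=
  match n with O => 0 | S m => psum f m + f m end.

Definition GS_partial (p : seqR) (xs : nat -> seqR) (alpha : seqR) (n : nat)
  : seqR :=
  fun j => p j + psum (fun k => alpha k * (xs k j - p j)) n.

(* GS(E,p): elements y of M_a of the form p + sum_k alpha_k (x_k - p), x_k in E,
   the index ranging over a finite or countable subset of N (encoded by letting
   alpha_k = 0 off that subset), the sum being the ||.||_a-limit of the partial
   sums. *)
Definition GS (a : seqR) (E : seqR -> Prop) (p : seqR) (y : seqR) : Prop :=
  in_Ma a y /\
  exists (xs : nat -> seqR) (alpha : seqR),
    (forall k, E (xs k)) /\
    (forall n, in_Ma a (fun j => y j - GS_partial p xs alpha n j)) /\
    is_lim_seq (fun n => normsq_a a (fun j => y j - GS_partial p xs alpha n j)) 0.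

(* Basic cylinders. Indices are 0-based here: {1,...,n} of the paper becomes
   {0,...,n-1}. *)
Definition basic_cylinder (J : seqR -> Prop) : Prop :=
  exists (n : nat) (L1 L2 L3 L4 : nat -> Prop) (p1 p2 : seqR),
    (forall i, (L1 i \/ L2 i \/ L3 i \/ L4 i) -> (i < n)%nat) /\
    (forall i, ~ (L1 i /\ L2 i)) /\ (forall i, ~ (L1 i /\ L3 i)) /\
    (forall i, ~ (L1 i /\ L4 i)) /\ (forall i, ~ (L2 i /\ L3 i)) /\
    (forall i, ~ (L2 i /\ L4 i)) /\ (forall i, ~ (L3 i /\ L4 i)) /\
    (forall i, (L1 i \/ L2 i \/ L3 i) -> 0 < p1 i /\ p1 i < p2 i /\ p2 i < 1) /\
    (forall i, L4 i -> 0 <= p1 i <= 1) /\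
    (forall x, J x <->
       forall i,
         (L1 i -> 0 <= x i <= p2 i) /\
         (L2 i -> p1 i <= x i <= p2 i) /\
         (L3 i -> p1 i <= x i <= 1) /\
         (L4 i -> x i = p1 i) /\
         (~ L1 i -> ~ L2 i -> ~ L3 i -> ~ L4 i -> 0 <= x i <= 1)).

From Stdlib Require Import Reals Lra Lia Classical.
From Coquelicot Require Import Coquelicot.
Open Scope R_scope.

(* A basic cylinder is a product of subsets of [0, 1], so i is outside Lambda(J) exactly
   when every point of J has i-th coordinate p_i. Then so does every partial sum
   defining an element y of GS(J, p), and a_i^2 (y_i - p_i)^2 is bounded by the
   vanishing squared distances ||y - partial sum||_a^2. Conversely, if x and x + alpha e_i
   lie in J, then p + alpha e_i = p + (x + alpha e_i - p) - (x - p) lies in GS(J, p). *)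

Lemma is_series_zero : is_series (fun _ : nat => 0) 0.
Proof.
  apply filterlim_ext with (fun _ => 0).
  - intros n. rewrite sum_n_const. ring.
  - apply filterlim_const.
Qed.

Lemma Series_zero : Series (fun _ : nat => 0) = 0.
Proof. exact (is_series_unique _ _ is_series_zero). Qed.

Lemma Series_ge_term (f : nat -> R) (i : nat) :
  (forall n, 0 <= f n) -> ex_series f -> f i <= Series f.
Proof.
  revert f. induction i as [|i IH]; intros f Hf Hex;
    assert (Hex1 : ex_series (fun k => f (S k))) by (now apply (ex_series_incr_1 f));
    rewrite (Series_incr_1 f Hex).
  - assert (0 <= Series (fun k => f (S k))).
    { rewrite <- Series_zero. apply Series_le; [intros n; split; [lra | apply Hf] | exact Hex1]. }
    lra.
  - assert (f (S i) <= Series (fun k => f (S k))) by (apply (IH (fun k => f (S k))); auto).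
    specialize (Hf 0%nat). lra.
Qed.

Lemma psum_zero (f : nat -> R) (n : nat) : (forall k, f k = 0) -> psum f n = 0.
Proof. intros Hf. induction n as [|n IH]; simpl; [reflexivity | rewrite IH, Hf; ring]. Qed.

Section Ma.

Variable a : seqR.

Lemma in_Ma_ext (x y : seqR) : (forall j, x j = y j) -> in_Ma a x -> in_Ma a y.
Proof.
  intros Hxy. apply ex_series_ext. intros j. rewrite Hxy. reflexivity.
Qed.

Lemma in_Ma_zero : in_Ma a (fun _ => 0).
Proof.
  exists 0. apply (is_series_ext (fun _ => 0 : R)); [| exact is_series_zero].
  intros j. change (0 = a j ^ 2 * 0 ^ 2). ring.
Qed.

Lemma in_Ma_scal (c : R) (x : seqR) : in_Ma a x -> in_Ma a (fun j => c * x j).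
Proof.
  intros Hx. apply ex_series_ext with (fun j => scal (c ^ 2) (a j ^ 2 * x j ^ 2)).
  - intros j. change (c ^ 2 * (a j ^ 2 * x j ^ 2) = a j ^ 2 * (c * x j) ^ 2). ring.
  - exact (@ex_series_scal R_AbsRing R_NormedModule _ _ Hx).
Qed.

Lemma in_Ma_plus (x y : seqR) :
  in_Ma a x -> in_Ma a y -> in_Ma a (fun j => x j + y j).
Proof.
  intros Hx Hy.
  apply (@ex_series_le R_AbsRing R_CompleteNormedModule _
           (fun j => scal 2 (plus (a j ^ 2 * x j ^ 2) (a j ^ 2 * y j ^ 2)))).
  - intros j. change (norm (a j ^ 2 * (x j + y j) ^ 2) <=
                      2 * (a j ^ 2 * x j ^ 2 + a j ^ 2 * y j ^ 2)).
    assert (0 <= a j ^ 2) by apply pow2_ge_0.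
    assert (0 <= a j ^ 2 * (x j - y j) ^ 2) by (apply Rmult_le_pos; [lra | apply pow2_ge_0]).
    unfold norm; simpl; unfold abs; simpl.
    rewrite Rabs_pos_eq by (apply Rmult_le_pos; [lra | apply pow2_ge_0]).
    nra.
  - apply (@ex_series_scal R_AbsRing R_NormedModule).
    exact (@ex_series_plus R_AbsRing R_NormedModule _ _ Hx Hy).
Qed.

Lemma in_Ma_minus (x y : seqR) :
  in_Ma a x -> in_Ma a y -> in_Ma a (fun j => x j - y j).
Proof.
  intros Hx Hy. apply in_Ma_ext with (fun j => x j + -1 * y j); [intros j; ring |].
  apply in_Ma_plus; [exact Hx | now apply in_Ma_scal].
Qed.

Lemma in_Ma_bounded (C : R) (z : seqR) :
  ex_series (fun j => a j ^ 2) -> (forall j, Rabs (z j) <= C) -> in_Ma a z.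
Proof.
  intros Ha Hz.
  apply (@ex_series_le R_AbsRing R_CompleteNormedModule _ (fun j => scal (C ^ 2) (a j ^ 2))).
  - intros j. change (norm (a j ^ 2 * z j ^ 2) <= C ^ 2 * a j ^ 2).
    unfold norm; simpl; unfold abs; simpl.
    rewrite Rabs_pos_eq by (apply Rmult_le_pos; apply pow2_ge_0).
    assert (z j ^ 2 <= C ^ 2).
    { rewrite <- pow2_abs. apply pow_incr. split; [apply Rabs_pos | apply Hz]. }
    assert (0 <= a j ^ 2) by apply pow2_ge_0. nra.
  - exact (@ex_series_scal R_AbsRing R_NormedModule _ _ Ha).
Qed.

Lemma normsq_a_ge_coord (z : seqR) (i : nat) :
  in_Ma a z -> a i ^ 2 * z i ^ 2 <= normsq_a a z.
Proof.
  intros Hz. apply (Series_ge_term (fun j => a j ^ 2 * z j ^ 2)); [| exact Hz].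
  intros j. apply Rmult_le_pos; apply pow2_ge_0.
Qed.

End Ma.

Lemma GS_coord_const (a : seqR) (E : seqR -> Prop) (p y : seqR) (i : nat) :
  a i <> 0 -> (forall x, E x -> x i = p i) -> GS a E p y -> y i = p i.
Proof.
  intros Hai Hconst (_ & xs & alpha & Hxs & Hres & Hlim).
  assert (Hpartial : forall n, GS_partial p xs alpha n i = p i).
  { intros n. unfold GS_partial. rewrite psum_zero; [ring |].
    intros k. rewrite (Hconst (xs k) (Hxs k)). ring. }
  assert (Hle : forall n, a i ^ 2 * (y i - p i) ^ 2
                  <= normsq_a a (fun j => y j - GS_partial p xs alpha n j)).
  { intros n. rewrite <- (Hpartial n). exact (normsq_a_ge_coord a _ i (Hres n)). }
  assert (Hle0 := is_lim_seq_le _ _ _ _ Hle (is_lim_seq_const _) Hlim). simpl in Hle0.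
  assert (0 < a i ^ 2) by (apply pow2_gt_0; exact Hai).
  assert (0 <= (y i - p i) ^ 2) by apply pow2_ge_0.
  apply Rminus_diag_uniq, Rsqr_0_uniq. unfold Rsqr. nra.
Qed.

(* [y = p + (u - p) - (v - p)], realised with points u, v, p, p, ... and coefficients 1, -1, 0, 0, ... *)
Lemma GS_translate_difference (a : seqR) (E : seqR -> Prop) (p u v y : seqR) :
  (forall x, E x -> in_Ma a x) -> E p -> E u -> E v ->
  (forall j, y j = p j + (u j - v j)) -> GS a E p y.
Proof.
  intros HEMa Ep Eu Ev Hy.
  set (xs := fun k => match k with 0%nat => u | 1%nat => v | _ => p end).
  set (alpha := fun k => match k with 0%nat => 1 | 1%nat => -1 | _ => 0 end).
  assert (Hstable : forall n j, (2 <= n)%nat -> y j - GS_partial p xs alpha n j = 0).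
  { intros n j Hn. induction Hn as [| n Hn IH].
    - unfold GS_partial; simpl. rewrite Hy. ring.
    - rewrite <- IH. destruct n as [| [| n]]; [lia | lia |].
      unfold GS_partial; simpl. ring. }
  split; [| exists xs, alpha; split; [| split]].
  - apply (in_Ma_ext a _ _ (fun j => eq_sym (Hy j))).
    apply in_Ma_plus; [| apply in_Ma_minus]; auto.
  - intros [| [| k]]; simpl; assumption.
  - intros [| [| n]].
    + apply in_Ma_ext with (fun j => u j - v j);
        [intros j; unfold GS_partial; simpl; rewrite Hy; ring |].
      apply in_Ma_minus; auto.
    + apply in_Ma_ext with (fun j => p j - v j);
        [intros j; unfold GS_partial; simpl; rewrite Hy; ring |].
      apply in_Ma_minus; auto.
    + apply in_Ma_ext with (fun _ => 0);
        [intros j; rewrite Hstable; [reflexivity | lia] | apply in_Ma_zero].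
  - apply is_lim_seq_ext_loc with (fun _ => 0); [| apply is_lim_seq_const].
    exists 2%nat. intros n Hn. unfold normsq_a. rewrite <- Series_zero at 1.
    apply Series_ext. intros j. rewrite Hstable by exact Hn. ring.
Qed.

Definition product_set (E : seqR -> Prop) : Prop :=
  exists S : nat -> R -> Prop, forall x, E x <-> forall j, S j (x j).

Lemma product_set_not_Lambda_const (E : seqR -> Prop) (p : seqR) (i : nat) :
  product_set E -> E p -> ~ Lambda E i -> forall x, E x -> x i = p i.
Proof.
  intros [S HS] Ep HnL x Ex.
  apply NNPP. intros Hne. apply HnL.
  exists p, (x i - p i). split; [exact Ep | split; [lra |]].
  apply HS. intros j. unfold e_. destruct (Nat.eqb_spec j i) as [-> | _].
  - replace (p i + (x i - p i) * 1) with (x i) by ring. exact (proj1 (HS x) Ex i).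
  - replace (p j + (x i - p i) * 0) with (p j) by ring. exact (proj1 (HS p) Ep j).
Qed.

Lemma basic_cylinder_product_set (J : seqR -> Prop) :
  basic_cylinder J -> product_set J.
Proof.
  intros (n & L1 & L2 & L3 & L4 & p1 & p2 & _ & _ & _ & _ & _ & _ & _ & _ & _ & HJ).
  exists (fun j t =>
    (L1 j -> 0 <= t <= p2 j) /\ (L2 j -> p1 j <= t <= p2 j) /\ (L3 j -> p1 j <= t <= 1) /\
    (L4 j -> t = p1 j) /\ (~ L1 j -> ~ L2 j -> ~ L3 j -> ~ L4 j -> 0 <= t <= 1)).
  exact HJ.
Qed.

Lemma basic_cylinder_unit_cube (J : seqR -> Prop) (x : seqR) :
  basic_cylinder J -> J x -> forall j, 0 <= x j <= 1.
Proof.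
  intros (n & L1 & L2 & L3 & L4 & p1 & p2 & _ & _ & _ & _ & _ & _ & _ & Hp123 & Hp4 & HJ) Jx j.
  destruct (proj1 (HJ x) Jx j) as (H1 & H2 & H3 & H4 & H5).
  destruct (classic (L1 j)) as [h1 | h1].
  { specialize (Hp123 j (or_introl h1)). specialize (H1 h1). lra. }
  destruct (classic (L2 j)) as [h2 | h2].
  { specialize (Hp123 j (or_intror (or_introl h2))). specialize (H2 h2). lra. }
  destruct (classic (L3 j)) as [h3 | h3].
  { specialize (Hp123 j (or_intror (or_intror h3))). specialize (H3 h3). lra. }
  destruct (classic (L4 j)) as [h4 | h4].
  { specialize (Hp4 j h4). specialize (H4 h4). lra. }
  exact (H5 h1 h2 h3 h4).
Qed.

Theorem lemma3p4 (a : nat -> R) (Ha : weight_ok a)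
  (J : (nat -> R) -> Prop) (HJ : basic_cylinder J) (Hne : exists x, J x)
  (p : nat -> R) (Hp : J p) (i : nat) :
  ~ Lambda J i <-> (forall x, GS a J p x -> x i = p i).
Proof.
  destruct Ha as [Hpos Hsum].
  split.
  - intros HnL y. apply GS_coord_const.
    + apply Rgt_not_eq, Hpos.
    + exact (product_set_not_Lambda_const J p i (basic_cylinder_product_set J HJ) Hp HnL).
  - intros Hconst (x & alpha & Jx & Halpha & Jx').
    assert (HJMa : forall z, J z -> in_Ma a z).
    { intros z Jz. apply (in_Ma_bounded a 1 z Hsum). intros j.
      destruct (basic_cylinder_unit_cube J z HJ Jz j). rewrite Rabs_pos_eq; lra. }
    assert (Hmoved : p i + alpha * e_ i i = p i).
    { apply (Hconst (fun j => p j + alpha * e_ i j)), (GS_translate_difference a J p _ x _ HJMa Hp Jx' Jx).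
      intros j. ring. }
    unfold e_ in Hmoved. rewrite Nat.eqb_refl in Hmoved. lra.
Qed.
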